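(* For every integer $n>0$, $$A(n)=B(n)=C(n+1)=\tfrac12 D(n+1)=E(n+2)=F(n+1).$$
   Context: The partition functions are defined as follows. - $A(n)$ is the number of partitions of $n$ into distinct parts. - $B(n)$ is the number of partitions of $n$ into odd parts. - $C(n)$ is the number of partitions of $n$ whose largest part is even and whose parts not exceeding half of the largest part are distinct. - $D(n)$ is the number of partitions of $n$ into non-negative parts (part $0$ allowed) in which the smallest part appears exactly twice and no other part is repeated. - $E(n)$ is the number of partitions of $n$ in which all parts are odd and the largest part appears exactly once. - $F(n)$ is the number of partitions of $n$ whose largest part is even and appears exactly once, all other parts being odd. *)

From mathcomp Require Import all_boot.
Set Implicit Arguments. Unset Strict Implicit. Unset Printing Implicit Defensive.

(* A partition is represented by the nonincreasing list of its parts. *)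

Fixpoint bounded_seqs (L M : nat) : seq (seq nat) :=
  [::] :: (if L is L'.+1 then
             [seq x :: s | x <- iota 0 M, s <- bounded_seqs L' M]
           else [::]).

Definition is_partition (n : nat) (s : seq nat) : bool :=
  [&& sorted geq s, all (fun x => 0 < x) s & sumn s == n].

Definition is_partition0 (n : nat) (s : seq nat) : bool :=
  sorted geq s && (sumn s == n).

(* Every partition of n (even with parts 0 allowed, as long as at most two
   parts are 0) has at most n+2 parts, each at most n, so it occurs in
   [bounded_seqs n.+2 n.+1]. *)
Definition npart (isp : nat -> seq nat -> bool) (P : pred (seq nat)) (n : nat) : nat :=
  count (fun s => isp n s && P s) (bounded_seqs n.+2 n.+1).

Definition largest (s : seq nat) : nat := head 0 s.
Definition smallest (s : seq nat) : nat := last 0 s.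

Definition A (n : nat) : nat := npart is_partition (fun s => uniq s) n.

Definition B (n : nat) : nat := npart is_partition (fun s => all odd s) n.

Definition C (n : nat) : nat :=
  npart is_partition
    (fun s => [&& s != [::], ~~ odd (largest s)
                & uniq [seq x <- s | x <= (largest s)./2]]) n.

Definition D (n : nat) : nat :=
  npart is_partition0
    (fun s => [&& s != [::], count_mem (smallest s) s == 2
                & uniq [seq x <- s | x != smallest s]]) n.

Definition E (n : nat) : nat :=
  npart is_partition
    (fun s => [&& s != [::], all odd s & count_mem (largest s) s == 1]) n.

Definition F (n : nat) : nat :=
  npart is_partition
    (fun s => match s with
              | a :: t => [&& ~~ odd a, a \notin t & all odd t]
              | [::] => false
              end) n.

(* Glaisher's bijection between partitions into distinct parts and partitions
   into odd parts is performed one part size at a time: passing from stage j to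
   stage j - 1 splits every part 2j into two parts j, and conversely merges pairs
   of parts j.  Running the same chain on the parts below an even largest part,
   which stays fixed, turns C-partitions into F-partitions.  Adding 1 to the
   largest part maps odd partitions of n onto F-partitions of n + 1, and
   F-partitions of n + 1 onto E-partitions of n + 2.  Finally, lowering by one a
   copy of the least positive part of a D-partition of n + 1 and discarding zero
   parts is two-to-one onto the partitions of n into distinct parts: the two
   preimages of l have least positive part 1 and 1 + the smallest part of l. *)

From mathcomp Require Import all_boot zify.
Set Implicit Arguments. Unset Strict Implicit. Unset Printing Implicit Defensive.

Lemma mem_bounded_seqs L M (s : seq nat) :
  (s \in bounded_seqs L M) = (size s <= L) && all (fun x => x < M) s.
Proof.
elim: L s => [|L IH] [|x s] //=; rewrite in_cons /=.
apply/allpairsP/idP => [[[y t]] /= [] | /and3P[size_s x_lt all_s]].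
  by rewrite mem_iota IH => /andP[_ y_lt] /andP[size_t all_t] [-> ->]; apply/and3P.
by exists (x, s); split; rewrite // ?mem_iota ?IH; apply/andP.
Qed.

Lemma uniq_bounded_seqs L M : uniq (bounded_seqs L M).
Proof.
elim: L => [|L IH] //=; apply/andP; split.
  by apply/allpairsP => -[[y t] []].
by apply: allpairs_uniq => [||[? ?] [? ?] _ _ [-> ->]] //; apply: iota_uniq.
Qed.

Lemma count_bij (T : eqType) (l1 l2 : seq T) (P Q : pred T) (f g : T -> T) :
    uniq l1 -> uniq l2 -> {subset P <= l1} -> {subset Q <= l2} ->
    (forall x, P x -> Q (f x) /\ g (f x) = x) ->
    (forall y, Q y -> P (g y) /\ f (g y) = y) ->
  count P l1 = count Q l2.
Proof.
move=> uniq1 uniq2 sub1 sub2 fK gK.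
rewrite -!size_filter -(size_map f); apply/perm_size/uniq_perm.
- rewrite map_inj_in_uniq ?filter_uniq // => x y.
  rewrite !mem_filter => /andP[/fK[_ fxK] _] /andP[/fK[_ fyK] _] fxy.
  by rewrite -fxK fxy fyK.
- exact: filter_uniq.
move=> y; apply/mapP/idP => [[x] | ].
  by rewrite !mem_filter => /andP[/fK[Qfx _] _] ->; rewrite Qfx sub2.
by rewrite mem_filter => /andP[/gK[Pgy gyK] _]; exists (g y); rewrite ?mem_filter ?Pgy ?sub1.
Qed.

Lemma count_mem_gt0 (T : eqType) (x : T) s : (0 < count_mem x s) = (x \in s).
Proof. by rewrite -has_count has_pred1. Qed.

Lemma allP_count (p : pred nat) s :
  reflect (forall x, 0 < count_mem x s -> p x) (all p s).
Proof.
by apply: (iffP allP) => p_s x; [rewrite count_mem_gt0 | rewrite -count_mem_gt0]; apply: p_s.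
Qed.

Lemma uniqP_count (s : seq nat) : reflect (forall x, count_mem x s <= 1) (uniq s).
Proof.
apply: (iffP idP) => [uniq_s x | count_s]; first by rewrite count_uniq_mem ?leq_b1.
by apply: count_mem_uniq => x; have := count_s x; rewrite -count_mem_gt0; lia.
Qed.

Lemma count_mem_filter (p : pred nat) x (s : seq nat) :
  count_mem x (filter p s) = p x * count_mem x s.
Proof.
rewrite count_filter; case: (boolP (p x)) => [px | npx]; rewrite ?mul0n ?mul1n.
  by apply: eq_count => y /=; case: (eqVneq y x) => // ->.
by rewrite -(count_pred0 s); apply: eq_count => y /=; case: (eqVneq y x) => // ->; apply/negbTE.
Qed.

Lemma geq_trans : transitive geq.
Proof. by move=> m n p /= le_mn le_pm; apply: leq_trans le_pm le_mn. Qed.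

Lemma sorted_sort_geq (s : seq nat) : sorted geq (sort geq s).
Proof. by apply: sort_sorted => m n; apply: leq_total. Qed.

Lemma eq_sorted_geq (s1 s2 : seq nat) : sorted geq s1 -> sorted geq s2 ->
  (forall x, count_mem x s1 = count_mem x s2) -> s1 = s2.
Proof.
move=> sorted1 sorted2 count12; apply: (sorted_eq (leT := geq)) => //.
- exact: geq_trans.
- by move=> m n /= /andP[le_nm le_mn]; apply/eqP; rewrite eqn_leq le_nm le_mn.
by apply/allP => x _; apply/eqP; apply: count12.
Qed.

Lemma sumn_sort (s : seq nat) : sumn (sort geq s) = sumn s.
Proof. by apply: perm_sumn; rewrite perm_sort. Qed.

Lemma sumn_rem (x : nat) s : x \in s -> sumn s = x + sumn (rem x s).
Proof. by move/perm_to_rem/perm_sumn. Qed.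

Lemma sumn_filter_predC1 (v : nat) s :
  sumn s = sumn (filter (predC1 v) s) + v * count_mem v s.
Proof.
elim: s => [|x s IH] /=; first by rewrite muln0.
case: (eqVneq x v) => [->|/negPf x_v] /=; rewrite ?eqxx ?x_v IH.
  by rewrite addnCA mulnDr muln1.
by rewrite add0n addnA.
Qed.

Lemma sumn_filter_pos (s : seq nat) : sumn (filter (fun x => 0 < x) s) = sumn s.
Proof. by elim: s => [|[|a] s IH] //=; rewrite IH. Qed.

Lemma size_le_sumn (s : seq nat) : size s <= sumn s + count_mem 0 s.
Proof.
elim: s => [|[|x] s IH] //=; first by rewrite add0n addnS ltnS.
by rewrite add0n !addSn ltnS -addnA (leq_trans IH) ?leq_addl.
Qed.

Lemma in_bounded_seqs N (s : seq nat) : sumn s = N -> count_mem 0 s <= 2 ->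
  s \in bounded_seqs N.+2 N.+1.
Proof.
move=> sum_s count0; rewrite mem_bounded_seqs; apply/andP; split.
  by have := size_le_sumn s; lia.
by apply/allP => x /sumn_rem; lia.
Qed.

Lemma last_min_path (a : nat) s :
  path geq a s -> forall x, x \in a :: s -> last a s <= x.
Proof.
elim: s a => [|b s IH] a /=; first by move=> _ x; rewrite inE => /eqP ->.
case/andP=> le_ba path_s x; rewrite in_cons => /orP[/eqP -> | ]; last exact: IH.
by apply: leq_trans (IH b path_s b _) le_ba; rewrite inE eqxx.
Qed.

Lemma smallest_count (s : seq nat) : sorted geq s -> s != [::] ->
  0 < count_mem (smallest s) s /\ forall x, 0 < count_mem x s -> smallest s <= x.
Proof.
case: s => // a s path_s _; split => [|x]; rewrite count_mem_gt0; first exact: mem_last.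
exact: last_min_path.
Qed.

Lemma smallest_eq (s : seq nat) z : sorted geq s -> 0 < count_mem z s ->
  (forall x, 0 < count_mem x s -> z <= x) -> smallest s = z.
Proof.
move=> sorted_s count_z min_z.
have s_nil : s != [::] by apply: contraTneq count_z => ->.
have [count_min min_le] := smallest_count sorted_s s_nil.
by apply/eqP; rewrite eqn_leq min_le // min_z.
Qed.

Lemma all_pos_count0 (s : seq nat) : all (fun x => 0 < x) s = (count_mem 0 s == 0).
Proof. by elim: s => [|[|x] s IH]. Qed.

Lemma is_partitionE n (s : seq nat) :
  is_partition n s = [&& sorted geq s, count_mem 0 s == 0 & sumn s == n].
Proof. by rewrite /is_partition all_pos_count0. Qed.

Lemma partition_count0 n s : is_partition n s -> count_mem 0 s = 0.
Proof. by case/and3P => _; rewrite all_pos_count0 => /eqP. Qed.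

Lemma partition_in_bounded_seqs n s : is_partition n s -> s \in bounded_seqs n.+2 n.+1.
Proof.
move=> part_s; apply: in_bounded_seqs; last by rewrite (partition_count0 part_s).
by case/and3P: part_s => _ _ /eqP.
Qed.

Lemma partition_part_le n s x : is_partition n s -> 0 < count_mem x s -> 0 < x <= n.
Proof.
case/and3P=> _ pos_s /eqP sum_s; rewrite count_mem_gt0 => x_s.
by rewrite (allP pos_s x x_s) -sum_s (sumn_rem x_s) leq_addr.
Qed.

Lemma is_partition_cons n a (t : seq nat) : is_partition n (a :: t) =
  [&& 0 < a, all (fun x => x <= a) t, sorted geq t,
      all (fun x => 0 < x) t & a + sumn t == n].
Proof.
rewrite /is_partition /= (path_sortedE geq_trans).
by case: (0 < a); rewrite /= ?andbF // -!andbA.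
Qed.

Lemma partition_cons_part n a t x :
  is_partition n (a :: t) -> 0 < count_mem x t -> 0 < x <= a.
Proof.
rewrite is_partition_cons count_mem_gt0 => /and5P[_ le_a _ pos_t _] x_t.
by rewrite (allP pos_t x x_t) (allP le_a x x_t).
Qed.

Lemma partition_smallest_gt0 n (l : seq nat) : 0 < n -> is_partition n l -> 0 < smallest l.
Proof.
move=> n_gt0 part_l; have count_0 := partition_count0 part_l.
case/and3P: part_l => sorted_l _ /eqP sum_l.
have l_nil : l != [::] by apply: contraTneq n_gt0 => l_nil; rewrite -sum_l l_nil.
have [count_m _] := smallest_count sorted_l l_nil.
by rewrite lt0n; apply: contraTneq count_m => ->; rewrite count_0.
Qed.

Lemma partition_bij (P Q : pred (seq nat)) N M (f g : seq nat -> seq nat) :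
    (forall s, is_partition N s -> P s -> [/\ is_partition M (f s), Q (f s) & g (f s) = s]) ->
    (forall s, is_partition M s -> Q s -> [/\ is_partition N (g s), P (g s) & f (g s) = s]) ->
  npart is_partition P N = npart is_partition Q M.
Proof.
move=> fK gK; apply: (count_bij (f := f) (g := g)); rewrite ?uniq_bounded_seqs //.
- by move=> s /andP[/partition_in_bounded_seqs].
- by move=> s /andP[/partition_in_bounded_seqs].
- by move=> s /andP[part_s P_s]; have [-> -> ->] := fK s part_s P_s.
- by move=> s /andP[part_s Q_s]; have [-> -> ->] := gK s part_s Q_s.
Qed.

Lemma eq_in_npart (isp : nat -> seq nat -> bool) (P Q : pred (seq nat)) N :
  (forall s, isp N s -> P s = Q s) -> npart isp P N = npart isp Q N.
Proof. by move=> PQ; apply: eq_count => s /=; case isp_s: (isp N s); rewrite //= PQ. Qed.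

Lemma all_ltn_notin a (t : seq nat) :
  all (fun x => x <= a) t -> a \notin t -> all (fun x => x < a) t.
Proof.
move=> le_a a_t; apply/allP => x x_t; rewrite ltn_neqAle (allP le_a x x_t) andbT.
by apply: contraNneq a_t => <-.
Qed.

Lemma partition_succ_head n a (t : seq nat) :
  is_partition n (a :: t) -> is_partition n.+1 (a.+1 :: t).
Proof.
rewrite !is_partition_cons => /and5P[_ le_a -> -> /eqP <-]; rewrite addSn eqxx !andbT /=.
by apply: (sub_all _ le_a) => x /leqW.
Qed.

Lemma partition_pred_head n a (t : seq nat) : 1 < a -> a \notin t ->
  is_partition n.+1 (a :: t) -> is_partition n (a.-1 :: t).
Proof.
move=> gt1_a a_t; rewrite !is_partition_cons => /and5P[_ le_a -> -> /eqP sum_t].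
have lt_a := all_ltn_notin le_a a_t.
apply/and3P; split; [lia | | lia].
by apply: (sub_all _ lt_a) => x; lia.
Qed.

Lemma npart_succ_head (P Q : pred (seq nat)) N : 0 < N ->
  (forall a t, is_partition N (a :: t) -> P (a :: t) -> Q (a.+1 :: t)) ->
  (forall a t, is_partition N.+1 (a :: t) -> Q (a :: t) ->
     [/\ 1 < a, a \notin t & P (a.-1 :: t)]) ->
  npart is_partition P N = npart is_partition Q N.+1.
Proof.
move=> N_gt0 PQ QP.
apply: (partition_bij (f := fun s => if s is a :: t then a.+1 :: t else s)
                      (g := fun s => if s is a :: t then a.-1 :: t else s)).
- case=> [|a t]; first by case/and3P => _ _ /eqP N0; move: N_gt0; rewrite -N0.
  by move=> part_s P_s; rewrite partition_succ_head // PQ.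
- case=> [|a t] // part_s Q_s; have [gt1_a a_t P_s] := QP a t part_s Q_s.
  by rewrite partition_pred_head // P_s prednK // ltnW.
Qed.

Lemma B_eq_F n : 0 < n -> B n = F n.+1.
Proof.
move=> n_gt0; apply: npart_succ_head => // a t.
- rewrite is_partition_cons => /and5P[_ le_a _ _ _] /andP[odd_a odd_t].
  apply/and3P; split=> //; first by rewrite /= odd_a.
  by apply/negP => /(allP le_a); rewrite ltnn.
- rewrite is_partition_cons => /and5P[a_gt0 _ _ _ _] /and3P[even_a a_t odd_t].
  by split=> //; [lia | apply/andP; split=> //; lia].
Qed.

Lemma F_eq_E n : 0 < n -> F n = E n.+1.
Proof.
move=> n_gt0; apply: npart_succ_head => // a t.
- rewrite is_partition_cons => /and5P[_ le_a _ _ _] /and3P[even_a _ odd_t].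
  have a1_t : count_mem a.+1 t = 0.
    by apply/count_memPn/negP => /(allP le_a); rewrite ltnn.
  by rewrite /= even_a odd_t eqxx a1_t.
- rewrite is_partition_cons => /and5P[a_gt0 le_a _ pos_t /eqP sum_s].
  case/and3P=> _ /andP[odd_a odd_t]; rewrite /largest /= eqxx => /eqP count_a.
  have a_t : a \notin t by apply/count_memPn; move: count_a; rewrite add1n => -[].
  have gt1_a : 1 < a.
    have := all_ltn_notin le_a a_t.
    case: t pos_t sum_s {le_a a_t odd_t count_a} => [|b t] /=.
      by lia.
    by case/andP=> b_gt0 _ _ /andP[lt_ba _]; lia.
  split=> //; apply/and3P; split=> //; first by lia.
  by apply/negP => /(allP odd_t); lia.
Qed.

Definition split_double (j : nat) (t : seq nat) : seq nat :=
  sort geq (nseq (count_mem j.*2 t).*2 j ++ filter (predC1 j.*2) t).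

Definition merge_pairs (j : nat) (t : seq nat) : seq nat :=
  sort geq (nseq (count_mem j t)./2 j.*2 ++ nseq (odd (count_mem j t)) j
            ++ filter (predC1 j) t).

Lemma count_split_double (j x : nat) (t : seq nat) : 0 < j ->
  count_mem x (split_double j t) =
    if x == j then (count_mem j.*2 t).*2 + count_mem j t
    else if x == j.*2 then 0 else count_mem x t.
Proof.
move=> j_gt0; rewrite count_sort count_cat count_nseq count_mem_filter /=.
by case: (eqVneq x j) => [->|ne_xj]; [case: (eqVneq j j.*2) | case: (eqVneq x j.*2) => [->|]]; lia.
Qed.

Lemma count_merge_pairs (j x : nat) (t : seq nat) : 0 < j ->
  count_mem x (merge_pairs j t) =
    if x == j then nat_of_bool (odd (count_mem j t))
    else if x == j.*2 then (count_mem j t)./2 + count_mem j.*2 t else count_mem x t.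
Proof.
move=> j_gt0; rewrite count_sort !count_cat !count_nseq count_mem_filter /=.
by case: (eqVneq x j) => [->|ne_xj]; [case: (eqVneq j j.*2) | case: (eqVneq x j.*2) => [->|]]; lia.
Qed.

Lemma sumn_split_double j t : sumn (split_double j t) = sumn t.
Proof.
rewrite sumn_sort sumn_cat sumn_nseq [in RHS](sumn_filter_predC1 j.*2).
by rewrite addnC -doubleMr doubleMl.
Qed.

Lemma sumn_merge_pairs j t : sumn (merge_pairs j t) = sumn t.
Proof.
rewrite sumn_sort !sumn_cat !sumn_nseq [in RHS](sumn_filter_predC1 j) addnA.
by rewrite addnC -doubleMl doubleMr -mulnDr [_.*2 + _]addnC odd_double_half.
Qed.

Lemma double_eqF j : 0 < j -> (j.*2 == j) = false.
Proof. by move=> j_gt0; apply/eqP; lia. Qed.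

Lemma split_doubleK j (t : seq nat) : 0 < j -> count_mem j t <= 1 -> sorted geq t ->
  merge_pairs j (split_double j t) = t.
Proof.
move=> j_gt0 count_j sorted_t; apply: eq_sorted_geq (sorted_sort_geq _) sorted_t _ => x.
rewrite count_merge_pairs // !count_split_double // eqxx double_eqF //.
case: (eqVneq x j) => [->|ne_xj]; last case: (eqVneq x j.*2) => [->|//]; rewrite ?eqxx; lia.
Qed.

Lemma merge_pairsK j (u : seq nat) : 0 < j -> count_mem j.*2 u = 0 -> sorted geq u ->
  split_double j (merge_pairs j u) = u.
Proof.
move=> j_gt0 count_2j sorted_u; apply: eq_sorted_geq (sorted_sort_geq _) sorted_u _ => x.
rewrite count_split_double // !count_merge_pairs // eqxx double_eqF //.
case: (eqVneq x j) => [->|ne_xj]; last case: (eqVneq x j.*2) => [->|//]; rewrite ?eqxx; lia.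
Qed.

(* For partitions of m, stage m means distinct parts and stage 0 odd parts. *)
Definition glaisher_stage (m j : nat) (t : seq nat) : bool :=
  all (fun x => [&& x <= m.*2, odd x || (x <= j.*2) & (x <= j) ==> (count_mem x t <= 1)]) t.

Lemma glaisher_stageP m j (t : seq nat) :
  reflect (forall x, 0 < count_mem x t ->
             [/\ x <= m.*2, odd x || (x <= j.*2) & x <= j -> count_mem x t <= 1])
          (glaisher_stage m j t).
Proof.
apply: (iffP (allP_count _ _)) => stage_t x /stage_t.
  by case/and3P=> -> -> /implyP.
by case=> -> -> /implyP.
Qed.

Lemma glaisher_count_le1 m j t : glaisher_stage m j t -> count_mem j t <= 1.
Proof.
move=> /glaisher_stageP stage_t.
by case: (posnP (count_mem j t)) => [->|/stage_t[_ _ ->]].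
Qed.

Lemma glaisher_count_double m j u : 0 < j -> glaisher_stage m j.-1 u -> count_mem j.*2 u = 0.
Proof.
move=> j_gt0 /glaisher_stageP stage_u.
by case: (posnP (count_mem j.*2 u)) => // /stage_u[_]; rewrite odd_double /=; lia.
Qed.

Lemma glaisher_split_double m j t : 0 < j -> j <= m ->
  glaisher_stage m j t -> glaisher_stage m j.-1 (split_double j t).
Proof.
move=> j_gt0 le_jm /glaisher_stageP stage_t; apply/glaisher_stageP => x.
rewrite count_split_double //; case: (eqVneq x j) => [->|ne_xj]; first by split; lia.
case: (eqVneq x j.*2) => // ne_x2j /stage_t[le_x odd_x distinct_x].
by split=> // [|le_xj]; [lia | apply: distinct_x; lia].
Qed.

Lemma glaisher_merge_pairs m j u : 0 < j -> j <= m ->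
  glaisher_stage m j.-1 u -> glaisher_stage m j (merge_pairs j u).
Proof.
move=> j_gt0 le_jm stage_u; have count_2j := glaisher_count_double j_gt0 stage_u.
move/glaisher_stageP: stage_u => stage_u; apply/glaisher_stageP => x.
rewrite count_merge_pairs //; case: (eqVneq x j) => [->|ne_xj]; first by split; lia.
case: (eqVneq x j.*2) => [->|ne_x2j]; first by split; lia.
move=> /stage_u[le_x odd_x distinct_x].
by split=> // [|le_xj]; [lia | apply: distinct_x; lia].
Qed.

Lemma partition_split_double n j t : 0 < j ->
  is_partition n t -> is_partition n (split_double j t).
Proof.
move=> j_gt0; rewrite !is_partitionE sorted_sort_geq sumn_split_double count_split_double //.
by case/and3P=> _ count0 sum_t; rewrite sum_t andbT /= !ifF //; apply/eqP; lia.
Qed.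

Lemma partition_merge_pairs n j t : 0 < j ->
  is_partition n t -> is_partition n (merge_pairs j t).
Proof.
move=> j_gt0; rewrite !is_partitionE sorted_sort_geq sumn_merge_pairs count_merge_pairs //.
by case/and3P=> _ count0 sum_t; rewrite sum_t andbT /= !ifF //; apply/eqP; lia.
Qed.

Lemma glaisher_split_spec n m j t : 0 < j -> j <= m ->
  is_partition n t -> glaisher_stage m j t ->
  [/\ is_partition n (split_double j t), glaisher_stage m j.-1 (split_double j t)
    & merge_pairs j (split_double j t) = t].
Proof.
move=> j_gt0 le_jm part_t stage_t.
split; [exact: partition_split_double | exact: glaisher_split_double |].
by apply: split_doubleK (glaisher_count_le1 stage_t) _; case/and3P: part_t.
Qed.

Lemma glaisher_merge_spec n m j u : 0 < j -> j <= m ->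
  is_partition n u -> glaisher_stage m j.-1 u ->
  [/\ is_partition n (merge_pairs j u), glaisher_stage m j (merge_pairs j u)
    & split_double j (merge_pairs j u) = u].
Proof.
move=> j_gt0 le_jm part_u stage_u.
split; [exact: partition_merge_pairs | exact: glaisher_merge_pairs |].
by apply: merge_pairsK (glaisher_count_double j_gt0 stage_u) _; case/and3P: part_u.
Qed.

Lemma npart_glaisher_step n j : 0 < j -> j <= n ->
  npart is_partition (glaisher_stage n j) n = npart is_partition (glaisher_stage n j.-1) n.
Proof.
move=> j_gt0 le_jn; apply: (partition_bij (f := split_double j) (g := merge_pairs j)).
  by move=> t; apply: glaisher_split_spec.
by move=> u; apply: glaisher_merge_spec.
Qed.

Lemma npart_glaisher n j : j <= n ->
  npart is_partition (glaisher_stage n j) n = npart is_partition (glaisher_stage n 0) n.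
Proof. by elim: j => // j IH lt_jn; rewrite npart_glaisher_step // IH // ltnW. Qed.

Lemma A_eq_glaisher n : A n = npart is_partition (glaisher_stage n n) n.
Proof.
apply: eq_in_npart => s part_s.
apply/uniqP_count/glaisher_stageP => [uniq_s x /(partition_part_le part_s) | stage_s x].
  by have := uniq_s x; split; lia.
case: (posnP (count_mem x s)) => [-> // | /[dup] pos /(partition_part_le part_s) ?].
by have [_ _] := stage_s x pos; apply; lia.
Qed.

Lemma B_eq_glaisher n : B n = npart is_partition (glaisher_stage n 0) n.
Proof.
apply: eq_in_npart => s part_s.
apply/allP_count/glaisher_stageP => [odd_s | stage_s] x /[dup] pos /(partition_part_le part_s).
  by have := odd_s x pos; split; lia.
by have [_ odd_x _] := stage_s x pos; lia.
Qed.

Lemma A_eq_B n : A n = B n.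
Proof. by rewrite A_eq_glaisher B_eq_glaisher npart_glaisher. Qed.

Lemma glaisher_stage_le m j t : glaisher_stage m j t -> all (fun x => x <= m.*2) t.
Proof. by move=> stage_t; apply: sub_all stage_t => x /and3P[]. Qed.

Lemma partition_cons_stage N a k t : ~~ odd a -> glaisher_stage a./2 k t ->
  is_partition N (a :: t) = (0 < a) && is_partition (N - a) t && (a <= N).
Proof.
move=> even_a /glaisher_stage_le; rewrite (_ : a./2.*2 = a); last by lia.
move=> le_a; rewrite is_partition_cons /is_partition le_a /=.
by case: (0 < a); case: (sorted _ t); case: (all _ t) => //=; apply/idP/idP; lia.
Qed.

(* On partitions of N, stage N is the C condition and stage 0 the F condition. *)
Definition head_glaisher_stage (j : nat) (s : seq nat) : bool :=
  if s is a :: t then [&& ~~ odd a, 0 < a & glaisher_stage a./2 (minn j a./2) t] else false.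

Definition map_tail (i : nat) (f : seq nat -> seq nat) (s : seq nat) : seq nat :=
  if s is a :: t then (if i <= a./2 then a :: f t else s) else s.

Lemma head_glaisher_transfer N i j k (f g : seq nat -> seq nat) :
    (forall m, m < i -> minn j m = minn k m) ->
    (forall m, i <= m -> minn j m = j /\ minn k m = k) ->
    (forall n m t, i <= m -> is_partition n t -> glaisher_stage m j t ->
       [/\ is_partition n (f t), glaisher_stage m k (f t) & g (f t) = t]) ->
  forall s, is_partition N s -> head_glaisher_stage j s ->
  [/\ is_partition N (map_tail i f s), head_glaisher_stage k (map_tail i f s)
    & map_tail i g (map_tail i f s) = s].
Proof.
move=> minn_small minn_large f_spec [|a t] //= part_s /and3P[even_a a_gt0 stage_t].
case: (leqP i a./2) => [le_i | lt_i]; last first.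
  by rewrite /= -minn_small // even_a a_gt0 stage_t leqNgt lt_i.
have [minn_j minn_k] := minn_large _ le_i; rewrite minn_j in stage_t.
move: part_s; rewrite (partition_cons_stage _ even_a stage_t) a_gt0 /= => /andP[part_t le_aN].
have [part_u stage_u tK] := f_spec _ _ _ le_i part_t stage_t.
by rewrite (partition_cons_stage _ even_a stage_u) /= a_gt0 part_u le_aN even_a minn_k stage_u le_i tK.
Qed.

Lemma npart_head_glaisher_step N i : 0 < i ->
  npart is_partition (head_glaisher_stage i) N =
  npart is_partition (head_glaisher_stage i.-1) N.
Proof.
move=> i_gt0; apply: (partition_bij (f := map_tail i (split_double i))
                                    (g := map_tail i (merge_pairs i))).
- apply: head_glaisher_transfer => [m|m|n m t]; [lia | lia | exact: glaisher_split_spec].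
- apply: head_glaisher_transfer => [m|m|n m t]; [lia | lia | exact: glaisher_merge_spec].
Qed.

Lemma npart_head_glaisher N i :
  npart is_partition (head_glaisher_stage i) N = npart is_partition (head_glaisher_stage 0) N.
Proof. by elim: i => // i IH; rewrite npart_head_glaisher_step. Qed.

Lemma C_eq_head_glaisher N : C N = npart is_partition (head_glaisher_stage N) N.
Proof.
apply: eq_in_npart => -[|a t] // part_s; rewrite /largest /=.
have /andP[a_gt0 le_aN] : 0 < a <= N.
  by have := partition_part_le part_s (x := a); rewrite /= eqxx; apply.
have -> : (a <= a./2) = false by apply/negbTE; rewrite -ltnNge; lia.
have -> : minn N a./2 = a./2 by lia.
rewrite a_gt0 /=; case: (boolP (odd a)) => //= even_a.
apply/uniqP_count/glaisher_stageP => [uniq_t x pos | stage_t x].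
  have := partition_cons_part part_s pos; split; [lia | lia | move=> le_x].
  by move: (uniq_t x); rewrite count_mem_filter le_x mul1n.
rewrite count_mem_filter; case: (leqP x a./2) => // le_x; rewrite mul1n.
by case: (posnP (count_mem x t)) => [-> // | /stage_t[_ _ ->]].
Qed.

Lemma F_eq_head_glaisher N : F N = npart is_partition (head_glaisher_stage 0) N.
Proof.
apply: eq_in_npart => -[|a t] // part_s /=.
have a_gt0 : 0 < a by move: part_s; rewrite is_partition_cons => /andP[].
rewrite a_gt0 min0n; case: (boolP (odd a)) => //= even_a.
apply/andP/glaisher_stageP => [[a_t /allP_count odd_t] x pos | stage_t].
  by have := odd_t x pos; have := partition_cons_part part_s pos; split; lia.
have odd_t : all odd t.
  apply/allP_count => x pos; have [_ odd_x _] := stage_t x pos.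
  by have := partition_cons_part part_s pos; lia.
by split=> //; apply/negP => /(allP odd_t); rewrite (negPf even_a).
Qed.

Lemma C_eq_F N : C N = F N.
Proof. by rewrite C_eq_head_glaisher F_eq_head_glaisher npart_head_glaisher. Qed.

Definition least_pos (s : seq nat) : nat := smallest (filter (fun x => 0 < x) s).

Lemma least_pos_count (s : seq nat) : sorted geq s -> 0 < sumn s ->
  [/\ 0 < least_pos s, 0 < count_mem (least_pos s) s
    & forall x, 0 < x < least_pos s -> count_mem x s = 0].
Proof.
move=> sorted_s sum_gt0; set p := filter (fun x => 0 < x) s.
have sorted_p : sorted geq p by apply: (sorted_filter geq_trans).
have p_nil : p != [::] by apply: contraTneq sum_gt0 => p_nil; rewrite -sumn_filter_pos -/p p_nil.
have [] := smallest_count sorted_p p_nil; rewrite -/(least_pos s) count_mem_filter.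
case: (posnP (least_pos s)) => [-> // | k_gt0]; rewrite mul1n => count_k min_k.
split=> // x /andP[x_gt0 lt_xk]; apply/eqP; rewrite -leqn0 leqNgt; apply: contraTN lt_xk => count_x.
by rewrite -leqNgt min_k // count_mem_filter x_gt0 mul1n.
Qed.

Lemma least_pos_eq (s : seq nat) k : sorted geq s -> 0 < k -> 0 < count_mem k s ->
  (forall x, 0 < x < k -> count_mem x s = 0) -> least_pos s = k.
Proof.
move=> sorted_s k_gt0 count_k below_k.
apply: smallest_eq; first by apply: (sorted_filter geq_trans).
  by rewrite count_mem_filter k_gt0 mul1n.
move=> x; rewrite count_mem_filter; case: (posnP x) => [-> // | x_gt0]; rewrite mul1n => count_x.
by rewrite leqNgt; apply: contraTN count_x => lt_xk; rewrite below_k ?x_gt0.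
Qed.

Definition D_pred (s : seq nat) : bool :=
  [&& s != [::], count_mem (smallest s) s == 2 & uniq [seq x <- s | x != smallest s]].

(* The multiplicities of a D-partition with least positive part k, whose lowest
   parts are either k, k or 0, 0, k. *)
Definition D_profile (k : nat) (s : seq nat) : Prop :=
  [/\ 0 < k, 0 < count_mem k s <= 2, count_mem 0 s = (count_mem k s == 1) * 2,
      forall x, 0 < x < k -> count_mem x s = 0
    & forall x, k < x -> count_mem x s <= 1].

Lemma D_profile_least_pos (s : seq nat) : sorted geq s -> 0 < sumn s ->
  D_pred s -> D_profile (least_pos s) s.
Proof.
move=> sorted_s sum_gt0 /and3P[s_nil /eqP count_z /uniqP_count uniq_rest].
have [_ min_z] := smallest_count sorted_s s_nil.
have [k_gt0 count_k below_k] := least_pos_count sorted_s sum_gt0.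
set z := smallest s in count_z min_z uniq_rest *.
set k := least_pos s in k_gt0 count_k below_k *.
have rest_le1 x : x != z -> count_mem x s <= 1.
  by move=> ne_xz; move: (uniq_rest x); rewrite count_mem_filter ne_xz mul1n.
have [z0 | zk] : z = 0 \/ z = k by have := below_k z; have := min_z k count_k; lia.
- have count_k1 : count_mem k s = 1 by have := rest_le1 k; rewrite z0; lia.
  rewrite z0 in count_z; split=> //; [by rewrite count_k1 | by rewrite count_z count_k1 | ].
  by move=> x lt_kx; apply: rest_le1; rewrite z0; lia.
- have count_0 : count_mem 0 s = 0 by have := min_z 0; rewrite zk; lia.
  rewrite zk in count_z; split=> //; [by rewrite count_z | by rewrite count_0 count_z | ].
  by move=> x lt_kx; apply: rest_le1; rewrite zk; lia.
Qed.

Lemma D_pred_of_profile (s : seq nat) k : sorted geq s -> D_profile k s ->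
  D_pred s /\ least_pos s = k.
Proof.
move=> sorted_s [k_gt0 /andP[count_k count_k2] count_0 below_k above_k].
split; last exact: least_pos_eq.
pose z := if count_mem k s == 1 then 0 else k.
have count_z : count_mem z s = 2 by rewrite /z; case: ifP; lia.
have rest_le1 x : x != z -> count_mem x s <= 1.
  case: (eqVneq x k) => [-> | ne_xk]; first by rewrite /z; case: ifP; lia.
  case: (eqVneq x 0) => [-> | ne_x0]; first by rewrite /z count_0; case: ifP.
  by have := below_k x; have := above_k x; lia.
have small_z : smallest s = z.
  apply: smallest_eq => [//||x]; first by rewrite count_z.
  case: (posnP x) => [-> | x_gt0 count_x]; first by rewrite count_0 /z; case: ifP.
  by have := below_k x; rewrite /z; case: ifP; lia.
apply/and3P; split; first by apply: contraTneq count_k => ->.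
  by rewrite small_z count_z.
apply/uniqP_count => x; rewrite count_mem_filter small_z.
by case: (eqVneq x z) => [// | /rest_le1]; rewrite mul1n.
Qed.

Definition lower_part (s : seq nat) : seq nat :=
  sort geq (filter (fun x => 0 < x) ((least_pos s).-1 :: rem (least_pos s) s)).

(* For k = 1, [rem 0 l] is [l] itself since a partition has no zero part. *)
Definition raise_part (k : nat) (l : seq nat) : seq nat :=
  sort geq (k :: (if k \in l then [::] else [:: 0; 0]) ++ rem k.-1 l).

Lemma count_lower_part (s : seq nat) (x : nat) : count_mem x (lower_part s) =
  if x == 0 then 0 else ((least_pos s).-1 == x) + (count_mem x s - (least_pos s == x)).
Proof.
rewrite count_sort count_mem_filter /= count_mem_rem.
by case: (posnP x) => [-> // | _]; rewrite mul1n.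
Qed.

Lemma count_raise_part k (l : seq nat) (x : nat) : count_mem x (raise_part k l) =
  (k == x) + (if k \in l then 0 else (0 == x) * 2) + (count_mem x l - (k.-1 == x)).
Proof.
by rewrite count_sort /= count_cat count_mem_rem addnA; case: (k \in l) => /=; lia.
Qed.

Lemma sumn_lower_part (s : seq nat) :
  sumn (lower_part s) = (least_pos s).-1 + sumn (rem (least_pos s) s).
Proof. by rewrite sumn_sort sumn_filter_pos. Qed.

Lemma sumn_raise_part k (l : seq nat) : sumn (raise_part k l) = k + sumn (rem k.-1 l).
Proof. by rewrite sumn_sort /= sumn_cat; case: (k \in l). Qed.

Lemma lower_part_spec n (s : seq nat) : is_partition0 n.+1 s -> D_pred s ->
  [/\ is_partition n (lower_part s), uniq (lower_part s),
      raise_part (least_pos s) (lower_part s) = s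
    & least_pos s != 1 -> (smallest (lower_part s)).+1 = least_pos s].
Proof.
case/andP=> sorted_s /eqP sum_s D_s.
have [|k_gt0 /andP[count_k count_k2] count_0 below_k above_k] :=
  D_profile_least_pos sorted_s _ D_s; first by rewrite sum_s.
have count_lower := count_lower_part s.
set k := least_pos s in k_gt0 count_k count_k2 count_0 below_k above_k count_lower *.
have count_l_le1 x : count_mem x (lower_part s) <= 1.
  rewrite count_lower; case: (eqVneq x 0) => // x_gt0; case: (eqVneq x k) => [-> | ne_xk]; first lia.
  by have := below_k x; have := above_k x; lia.
split.
- have k_in : k \in s by rewrite -count_mem_gt0.
  rewrite is_partitionE sorted_sort_geq count_lower eqxx sumn_lower_part -/k /=.
  by have := sumn_rem k_in; lia.
- by apply/uniqP_count.
- apply: eq_sorted_geq (sorted_sort_geq _) sorted_s _ => x.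
  have k1_ne_k : (k.-1 == k) = false by apply/negbTE; lia.
  rewrite count_raise_part -count_mem_gt0 !count_lower eqxx (gtn_eqF k_gt0) k1_ne_k.
  case: (eqVneq x 0) => [-> | x_ne0]; first by rewrite count_0; case: ifP; lia.
  by case: (eqVneq x k) => [-> | x_ne_k]; case: ifP; lia.
- move=> k_ne1; rewrite (@smallest_eq _ k.-1) ?prednK // => [|| x]; first exact: sorted_sort_geq.
    by rewrite count_lower eqxx; case: ifP; lia.
  by rewrite count_lower; case: ifP => // /negbT x_ne0; have := below_k x; lia.
Qed.

Lemma raise_part_spec n (l : seq nat) k : 0 < n -> is_partition n l -> uniq l ->
  k \in [:: 1; (smallest l).+1] ->
  [/\ is_partition0 n.+1 (raise_part k l), D_pred (raise_part k l),
      least_pos (raise_part k l) = k & lower_part (raise_part k l) = l].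
Proof.
move=> n_gt0 part_l /uniqP_count uniq_l; rewrite !inE => k_eq.
have count_0 := partition_count0 part_l.
case/and3P: part_l => sorted_l _ /eqP sum_l.
have l_nil : l != [::] by apply: contraTneq n_gt0 => l_nil; rewrite -sum_l l_nil.
have [count_m min_m] := smallest_count sorted_l l_nil.
have k_gt0 : 0 < k by case/orP: k_eq => /eqP ->.
have below_l x : 0 < x < k.-1 -> count_mem x l = 0.
  by case/orP: k_eq => /eqP ->; [lia | have := min_m x; lia].
have count_pred : (k.-1 == 0) || (0 < count_mem k.-1 l).
  by case/orP: k_eq => /eqP -> //=; rewrite count_m orbT.
have count_r := count_raise_part k l.
have profile : D_profile k (raise_part k l).
  have k1_ne_k : (k.-1 == k) = false by apply/negbTE; lia.
  split=> // [||x /andP[x_gt0 lt_xk] | x lt_kx]; rewrite ?count_r ?eqxx ?k1_ne_k -?count_mem_gt0.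
  - by case: ifP; have := uniq_l k; lia.
  - by rewrite count_0; case: ifP; have := uniq_l k; lia.
  - case: (eqVneq x k.-1) => [-> | ne_x]; last by have := below_l x; case: ifP; lia.
    by have := uniq_l k.-1; case: ifP; lia.
  - by have := uniq_l x; case: ifP; lia.
have [D_r least_r] := D_pred_of_profile (sorted_sort_geq _) profile.
split=> //.
- rewrite /is_partition0 sorted_sort_geq sumn_raise_part.
  case/orP: count_pred => [/eqP k1 | ]; last by rewrite count_mem_gt0 => /sumn_rem; lia.
  by rewrite k1 rem_id -?count_mem_gt0 ?count_0 // sum_l; lia.
- apply: eq_sorted_geq (sorted_sort_geq _) sorted_l _ => x.
  rewrite count_lower_part least_r count_r.
  case: (eqVneq x 0) => [-> | x_ne0]; first by rewrite count_0.
  by case: (eqVneq x k.-1) x_ne0 => [-> | ne_x] x_ne0; case: ifP; lia.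
Qed.

Lemma D_pred_count_le2 (s : seq nat) x : D_pred s -> count_mem x s <= 2.
Proof.
case/and3P=> _ /eqP count_min /uniqP_count/(_ x); rewrite count_mem_filter.
by case: (eqVneq x (smallest s)) => [-> | _]; rewrite ?count_min // mul1n => /leqW.
Qed.

Lemma D_in_bounded_seqs N (s : seq nat) : is_partition0 N s -> D_pred s ->
  s \in bounded_seqs N.+2 N.+1.
Proof. by case/andP=> _ /eqP sum_s /D_pred_count_le2 count_le2; apply: in_bounded_seqs. Qed.

Lemma D_eq_2A n : 0 < n -> D n.+1 = 2 * A n.
Proof.
move=> n_gt0; change (npart is_partition0 D_pred n.+1 = 2 * A n).
rewrite /npart -size_filter -(count_predC (fun s => least_pos s == 1)) !count_filter.
have bounded s : is_partition0 n.+1 s && D_pred s -> s \in bounded_seqs n.+3 n.+2.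
  by case/andP; apply: D_in_bounded_seqs.
rewrite mul2n -addnn; congr (_ + _).
- apply: (count_bij (f := lower_part) (g := raise_part 1)); rewrite ?uniq_bounded_seqs //.
  + by move=> s /andP[_ /bounded].
  + by move=> l /andP[/partition_in_bounded_seqs].
  + move=> s /and3P[/eqP k1 part_s D_s].
    by have [-> -> + _] := lower_part_spec part_s D_s; rewrite k1.
  + move=> l /andP[part_l uniq_l].
    by have [/= -> -> -> ->] := raise_part_spec n_gt0 part_l uniq_l (mem_head 1 _).
- apply: (count_bij (f := lower_part) (g := fun l => raise_part (smallest l).+1 l)).
  all: rewrite ?uniq_bounded_seqs //.
  + by move=> s /andP[_ /bounded].
  + by move=> l /andP[/partition_in_bounded_seqs].
  + move=> s /and3P[k_ne1 part_s D_s].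
    by have [-> -> + ->] := lower_part_spec part_s D_s.
  + move=> l /andP[part_l uniq_l].
    have k_in : (smallest l).+1 \in [:: 1; (smallest l).+1] by rewrite !inE eqxx orbT.
    have [/= -> -> -> ->] := raise_part_spec n_gt0 part_l uniq_l k_in.
    by rewrite eqSS -lt0n (partition_smallest_gt0 n_gt0 part_l).
Qed.

Theorem theorem7 (n : nat) (hn : 0 < n) :
  [/\ A n = B n, B n = C n.+1, D n.+1 = 2 * C n.+1,
      C n.+1 = E n.+2 & E n.+2 = F n.+1].
Proof.
split.
- exact: A_eq_B.
- by rewrite B_eq_F // C_eq_F.
- by rewrite D_eq_2A // A_eq_B B_eq_F // C_eq_F.
- by rewrite C_eq_F F_eq_E.
- by rewrite F_eq_E.
Qed.
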